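(* Let $(\Omega,\mathcal{F},\mathbb{P})$ be an atomless probability space, let $Z_t$ be a $\mathbb{R}^D$-valued random vector (risk factors) whose distribution has compact support, and let $V_t$ (value function) and $U_t$ (its approximation) be real-valued functions on $\operatorname{supp}(Z_t)$, with $V_t$ regular enough that $X_t:=V_t(Z_t)^+\in L^\infty$. Let $z_t^1,\dots,z_t^n\in\operatorname{supp}(Z_t)$ be realizations of $Z_t$ and set $\mathbf{x}_t=(V_t(z_t^i)^+)_{i=1}^n$, $\mathbf{y}_t=(U_t(z_t^i)^+)_{i=1}^n$. Then for any law-invariant exposure measure $\rho$ on $\mathcal{M}_{1,c}(\mathbb{R})$, \[ \left|\rho(X_t)-\widehat{\rho}(\mathbf{y}_t)\right|\le \left|\rho(X_t)-\widehat{\rho}(\mathbf{x}_t)\right|+\Vert V_t-U_t\Vert_\infty . \]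
   Context: $x^+=\max\{x,0\}$. An exposure measure is a map $\rho:L^0(\Omega,\mathcal{F},\mathbb{P})\to\mathbb{R}\cup\{\infty\}$ that is monotone ($X_1\le X_2\Rightarrow\rho(X_1)\le\rho(X_2)$) and cash-additive ($\rho(X+c)=\rho(X)+c$ for $c\in\mathbb{R}$). It is law-invariant if $\rho(X)$ depends only on the distribution function $F_X$ of $X$, so one writes $\rho(X)=\rho(F_X)$; $\mathcal{M}_{1,c}(\mathbb{R})$ denotes the compactly supported probability measures on $\mathbb{R}$, and ''$\rho$ on $\mathcal{M}_{1,c}(\mathbb{R})$'' means $\rho$ regarded as a map on such laws. For a finite sample $\mathbf{x}=(x^i)_{i=1}^n$, the empirical distribution is $F_{\mathbf{x}}(x)=\frac1n\sum_{i=1}^n\mathbb{1}_{\{x\ge x^i\}}$ and the empirical estimator is $\widehat\rho(\mathbf{x})=\rho(F_{\mathbf{x}})$. For a function $f$ on a set $S$, $\Vert f\Vert_\infty=\sup_{s\in S}|f(s)|$ (genuine supremum); here $S=\operatorname{supp}(Z_t)$. *)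

From HB Require Import structures.
From mathcomp Require Import all_boot all_order all_algebra.
From mathcomp Require Import all_classical all_reals all_analysis.
Set Implicit Arguments. Unset Strict Implicit. Unset Printing Implicit Defensive.
Import Order.TTheory GRing.Theory Num.Theory.
Import numFieldNormedType.Exports.
Local Open Scope classical_set_scope.
Local Open Scope ring_scope.

Definition atomless d (T : measurableType d) (R : realType)
    (P : probability T R) : Prop :=
  forall A : set T, measurable A -> (0 < P A)%E ->
    exists B : set T, [/\ measurable B, B `<=` A & (0 < P B < P A)%E].

Definition cdfRV d (T : measurableType d) (R : realType)
    (P : probability T R) (X : T -> R) : R -> \bar R :=
  fun x => P (X @^-1` `]-oo, x]).

Definition empcdf (R : realType) (n : nat) (x : 'I_n -> R) : R -> \bar R :=
  fun r => (n%:R^-1 * \sum_(i < n) (((x i <= r)%R)%:R : R))%:E.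

(* A law-invariant map rho, given as a map on distribution functions, so
   that rho(X) := rho(F_X).  It is an exposure measure on L^0(Omega,F,P):
   monotone (w.r.t. P-a.s. order) and cash-additive. *)
Definition law_inv_exposure_measure d (T : measurableType d) (R : realType)
    (P : probability T R) (rho : (R -> \bar R) -> \bar R) : Prop :=
  (forall X1 X2 : T -> R, measurable_fun setT X1 -> measurable_fun setT X2 ->
     {ae P, forall w, X1 w <= X2 w} ->
     (rho (cdfRV P X1) <= rho (cdfRV P X2))%E) /\
  (forall (X : T -> R) (c : R), measurable_fun setT X ->
     rho (cdfRV P (fun w => X w + c)) = (rho (cdfRV P X) + c%:E)%E).

Definition supp d (T : measurableType d) (R : realType)
    (P : probability T R) (D : nat) (Z : T -> 'rV[R]_D) : set 'rV[R]_D :=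
  [set z | forall e : R, 0 < e -> (0 < P (Z @^-1` ball z e))%E].

Definition supnorm (R : realType) (A : Type) (S : set A) (f : A -> R) : \bar R :=
  ereal_sup [set (`|f a|)%:E | a in S].

From HB Require Import structures.
From mathcomp Require Import all_boot all_order all_algebra.
From mathcomp Require Import all_classical all_reals all_analysis.
From mathcomp Require Import lra.
Set Implicit Arguments. Unset Strict Implicit. Unset Printing Implicit Defensive.
Import Order.TTheory GRing.Theory Num.Theory.
Import numFieldNormedType.Exports.
Local Open Scope classical_set_scope.
Local Open Scope ring_scope.

(* On an atomless space every value in [0, P A] is the probability of a
   subset of A (Sierpinski), so Omega splits into n events of probability
   1/n, i.e. there is a random index g uniform on {0, ..., n-1}.  Then x o g
   has the empirical law of x, and monotonicity plus cash-additivity of rho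
   give rho^(y) <= rho^(x) + s whenever y <= x + s pointwise.  As the
   positive part is 1-Lipschitz, x_t and y_t differ componentwise by at most
   ||V_t - U_t||, and the triangle inequality concludes. *)

Lemma exists_half_sup (R : realType) (S : set R) :
    S !=set0 -> has_ubound S -> (forall x, S x -> 0 <= x) ->
  exists2 s, S s & forall x, S x -> x <= 2 * s.
Proof.
move=> S0 S_ub S_ge0; have supS : has_sup S by split.
have [supS_gt0|supS_le0] := ltP 0 (sup S).
  have [s Ss lt_s] := sup_adherent (divr_gt0 supS_gt0 (ltr0Sn _ 1)) supS.
  by exists s => // x /(sup_upper_bound supS) x_le; lra.
have [s Ss] := S0; exists s => // x /(sup_upper_bound supS) x_le.
by have := S_ge0 _ Ss; lra.
Qed.

Section fine_probability.
Context d (T : measurableType d) (R : realType) (P : probability T R).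

Lemma fine_probability_ge0 A : 0 <= fine (P A).
Proof. exact/fine_ge0/measure_ge0. Qed.

Lemma fine_probabilityK A : measurable A -> (fine (P A))%:E = P A.
Proof. by move=> mA; rewrite fineK // fin_num_measure. Qed.

Lemma le_fine_probability A B : measurable A -> measurable B -> A `<=` B ->
  fine (P A) <= fine (P B).
Proof.
by move=> mA mB AB; rewrite -lee_fin !fine_probabilityK // le_measure // inE.
Qed.

Lemma fine_probability_le1 A : measurable A -> fine (P A) <= 1.
Proof. by move=> mA; rewrite -lee_fin fine_probabilityK // probability_le1. Qed.

Lemma fine_probabilityU A B : measurable A -> measurable B -> A `&` B = set0 ->
  fine (P (A `|` B)) = fine (P A) + fine (P B).
Proof. by move=> mA mB AB0; rewrite measureU // fineD // fin_num_measure. Qed.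

Lemma fine_probabilityD A B : measurable A -> measurable B -> B `<=` A ->
  fine (P (A `\` B)) = fine (P A) - fine (P B).
Proof.
move=> mA mB BA; rewrite measureD ?setIidr //; last first.
  by rewrite ltey_eq fin_num_measure.
by rewrite fineB // fin_num_measure.
Qed.

End fine_probability.

Section atomless_probability.
Context d (T : measurableType d) (R : realType) (P : probability T R).
Hypothesis P_atomless : atomless P.

Lemma atomless_half_subset A : measurable A -> 0 < fine (P A) ->
  exists B, [/\ measurable B, B `<=` A, 0 < fine (P B)
                & fine (P B) <= fine (P A) / 2].
Proof.
move=> mA PA_gt0.
have [C [mC CA /andP[]]] : exists C,
    [/\ measurable C, C `<=` A & (0 < P C < P A)%E].
  by apply: P_atomless; rewrite // -fine_probabilityK // lte_fin.
rewrite -(fine_probabilityK P mC) -(fine_probabilityK P mA) !lte_fin.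
move=> PC_gt0 PC_lt.
have [PC_le|PC_gt] := leP (fine (P C)) (fine (P A) / 2); first by exists C.
exists (A `\` C); split; [exact: measurableD | by move=> w [] | |];
  rewrite fine_probabilityD //; lra.
Qed.

Lemma atomless_small_subset A e : measurable A -> 0 < fine (P A) -> 0 < e ->
  exists B, [/\ measurable B, B `<=` A, 0 < fine (P B) & fine (P B) <= e].
Proof.
move=> mA PA_gt0 e_gt0.
have halving k : exists B,
    [/\ measurable B, B `<=` A, 0 < fine (P B) & fine (P B) <= 2 ^- k].
  elim: k => [|k [B [mB BA PB_gt0 PB_le]]].
    by exists A; split; rewrite // expr0 invr1 fine_probability_le1.
  have [C [mC CB PC_gt0 PC_le]] := atomless_half_subset mB PB_gt0.
  exists C; split => //; first exact: subset_trans CB BA.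
  by rewrite exprSr invfM (le_trans PC_le) // ler_pM2r ?invr_gt0.
pose k := Num.Def.archi_bound e^-1.
have ltk : e^-1 < k%:R by apply: archi_boundP; rewrite invr_ge0 ltW.
have [B [mB BA PB_gt0 PB_le]] := halving k.
exists B; split => //; apply: (le_trans PB_le).
rewrite invf_ple ?posrE ?exprn_gt0 //; apply: ltW (lt_le_trans ltk _).
by rewrite -natrX ler_nat ltnW // ltn_expl.
Qed.

Section greedy_exhaustion.
Variables (A : set T) (t : R).
Hypotheses (mA : measurable A) (t_ge0 : 0 <= t) (t_le_PA : t <= fine (P A)).

Let extends B C :=
  [/\ measurable C, C `<=` A `\` B & fine (P B) + fine (P C) <= t].

(* The guard sits inside the existential so that [cid] below yields a total
   choice function. *)
Lemma exists_near_max_extension B : exists C, fine (P B) <= t ->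
  extends B C /\ forall C', extends B C' -> fine (P C') <= 2 * fine (P C).
Proof.
have [PB_le|PB_gt] := boolp.pselect (fine (P B) <= t); last first.
  by exists set0 => /PB_gt.
have [_ [C extC <-] C_max] : exists2 s, [set fine (P C) | C in extends B] s &
    forall x, [set fine (P C) | C in extends B] x -> x <= 2 * s.
  apply: exists_half_sup.
  - exists 0, set0; last by rewrite measure0.
    by split; rewrite // measure0 addr0.
  - by exists 1 => _ [C [mC _ _] <-]; exact: fine_probability_le1.
  - by move=> _ [C _ <-]; exact: fine_probability_ge0.
by exists C => _; split => // C' extC'; apply: C_max; exists C'.
Qed.

Let next B := projT1 (cid (exists_near_max_extension B)).
Let nextP B := projT2 (cid (exists_near_max_extension B)).

Fixpoint greedy k :=
  if k is k'.+1 then greedy k' `|` next (greedy k') else set0.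

Let fine_P_extend B C : measurable B -> extends B C ->
  fine (P (B `|` C)) = fine (P B) + fine (P C).
Proof.
move=> mB [mC CAB _]; rewrite fine_probabilityU //.
by apply/seteqP; split => // w [Bw /CAB[]].
Qed.

Lemma greedy_spec k :
  [/\ measurable (greedy k), greedy k `<=` A & fine (P (greedy k)) <= t].
Proof.
elim: k => [|k [mBk BkA PBk]] /=; first by split; rewrite ?measure0.
have [extC _] := nextP PBk; have [mC CA _] := extC.
split; [exact: measurableU | by move=> w [/BkA|/CA[]] |].
by rewrite fine_P_extend //; case: extC.
Qed.

Let greedy_le k : fine (P (greedy k)) <= t.
Proof. by case: (greedy_spec k). Qed.

Let fine_P_greedyS k :
  fine (P (greedy k.+1)) = fine (P (greedy k)) + fine (P (next (greedy k))).
Proof.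
rewrite fine_P_extend //; first by case: (greedy_spec k).
by case: (nextP (greedy_le k)).
Qed.

Let greedy_next_near_max k C : extends (greedy k) C ->
  fine (P C) <= 2 * fine (P (next (greedy k))).
Proof. exact: (nextP (greedy_le k)).2. Qed.

Let B_oo := \bigcup_k greedy k.

Let mB_oo : measurable B_oo.
Proof. by apply: bigcupT_measurable => k; case: (greedy_spec k). Qed.

Let B_ooA : B_oo `<=` A.
Proof. by move=> w [k _]; case: (greedy_spec k) => _ + _; apply. Qed.

Lemma fine_P_bigcup_greedy_le : fine (P B_oo) <= t.
Proof.
have mB k : measurable (greedy k) by case: (greedy_spec k).
have greedy_nd : nondecreasing_seq greedy.
  by apply/nondecreasing_seqP => k; apply/subsetPset => w; left.
have P_cvg := @nondecreasing_cvg_mu _ _ _ P _ mB mB_oo greedy_nd.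
rewrite -lee_fin fine_probabilityK // -(cvg_lim _ P_cvg) //.
apply: lime_le; first exact: cvgP P_cvg.
by apply: nearW => k /=; rewrite -fine_probabilityK // lee_fin.
Qed.

(* If P B_oo < t, a small enough subset D of A \ B_oo extends every
   greedy k, so each step adds at least P D / 2 and P (greedy k) would grow
   without bound. *)
Lemma fine_P_bigcup_greedy : fine (P B_oo) = t.
Proof.
case: (ltgtP (fine (P B_oo)) t) => [lt_t|gt_t|//]; last first.
  by have := fine_P_bigcup_greedy_le; rewrite leNgt gt_t.
have rest_gt0 : 0 < fine (P (A `\` B_oo)).
  by rewrite fine_probabilityD // subr_gt0 (lt_le_trans lt_t).
have gap_gt0 : 0 < t - fine (P B_oo) by rewrite subr_gt0.
have [D [mD DA PD_gt0 PD_le]] :=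
  atomless_small_subset (measurableD mA mB_oo) rest_gt0 gap_gt0.
have extD k : extends (greedy k) D.
  split => //.
    by move=> w /DA[Aw notB]; split => // Bw; apply: notB; exists k.
  have : fine (P (greedy k)) <= fine (P B_oo).
    apply: le_fine_probability => //; last exact: bigcup_sup.
    by case: (greedy_spec k).
  lra.
have growth k : k%:R * (fine (P D) / 2) <= fine (P (greedy k)).
  elim: k => [|k IH]; first by rewrite mul0r fine_probability_ge0.
  rewrite fine_P_greedyS -natr1 mulrDl mul1r.
  have := greedy_next_near_max (extD k); lra.
pose k := Num.Def.archi_bound (t / (fine (P D) / 2)).
have : t / (fine (P D) / 2) < k%:R.
  by apply: archi_boundP; apply: divr_ge0 => //; lra.
rewrite ltr_pdivrMr; last lra.
by have := growth k; have := greedy_le k; lra.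
Qed.

Lemma atomless_measure_ivt :
  exists B, [/\ measurable B, B `<=` A & fine (P B) = t].
Proof. by exists B_oo; split; last exact: fine_P_bigcup_greedy. Qed.

End greedy_exhaustion.

Lemma atomless_partition m c E : 0 <= c -> measurable E ->
    fine (P E) = m.+1%:R * c ->
  exists g : T -> 'I_m.+1, forall i, measurable (E `&` g @^-1` [set i]) /\
    fine (P (E `&` g @^-1` [set i])) = c.
Proof.
move=> c_ge0; elim: m E => [|m IH] E mE PE.
  exists (fun=> ord0) => i; rewrite (ord1 i) setIidl; last by move=> w _ /=.
  by rewrite PE mul1r.
have c_le : c <= fine (P E) by rewrite PE ler_peMl // ler1n.
have [B [mB BE PB]] := atomless_measure_ivt mE c_ge0 c_le.
have PEB : fine (P (E `\` B)) = m.+1%:R * c.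
  by rewrite fine_probabilityD // PE PB -natr1 mulrDl mul1r addrK.
have [g' g'P] := IH (E `\` B) (measurableD mE mB) PEB.
pose g w := if `[< B w >] then ord0 else lift ord0 (g' w).
exists g => i; have [j ->|->] := unliftP ord0 i.
- suff -> : E `&` g @^-1` [set lift ord0 j] = (E `\` B) `&` g' @^-1` [set j].
    exact: g'P.
  apply/seteqP; split => w; rewrite /g /=.
    by case: asboolP => [Bw [_ /eqP]|nBw [Ew /lift_inj]].
  by move=> [[Ew nBw] <-]; split => //; case: asboolP.
- suff -> : E `&` g @^-1` [set ord0] = B by [].
  apply/seteqP; split => w; rewrite /g /=.
    by case: asboolP => // nBw [_ /eqP].
  by move=> Bw; split; [exact: BE | case: asboolP].
Qed.

Lemma atomless_uniform_index n : exists g : T -> 'I_n.+1, forall i,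
  measurable (g @^-1` [set i]) /\ P (g @^-1` [set i]) = (n.+1%:R^-1)%:E.
Proof.
have [||g gP] := @atomless_partition n n.+1%:R^-1 setT _ measurableT.
- by rewrite invr_ge0.
- by rewrite probability_setT /= divff.
exists g => i; have [] := gP i; rewrite setTI => mgi Pgi.
by split; rewrite // -fine_probabilityK // Pgi.
Qed.

End atomless_probability.

Lemma preimage_comp_index (T U : Type) n (g : T -> 'I_n) (x : 'I_n -> U)
    (S : set U) :
  (x \o g) @^-1` S = \big[setU/set0]_(i < n | `[< S (x i) >]) g @^-1` [set i].
Proof.
rewrite -bigcup_seq_cond; apply/seteqP; split => w /=.
  by exists (g w) => //=; rewrite mem_index_enum; apply/asboolP.
by move=> [i /andP[_ /asboolP Sxi] /= ->].
Qed.

Section uniform_index.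
Context d (T : measurableType d) (R : realType) (P : probability T R).
Variables (n : nat) (g : T -> 'I_n.+1).
Hypothesis g_uniform : forall i,
  measurable (g @^-1` [set i]) /\ P (g @^-1` [set i]) = (n.+1%:R^-1)%:E.

Lemma measurable_comp_index (x : 'I_n.+1 -> R) : measurable_fun setT (x \o g).
Proof.
move=> _ S _; rewrite setTI preimage_comp_index.
by apply: bigsetU_measurable => i _; case: (g_uniform i).
Qed.

Lemma cdfRV_comp_uniform_index (x : 'I_n.+1 -> R) :
  cdfRV P (x \o g) = empcdf x.
Proof.
apply/funext => r; rewrite /cdfRV /empcdf preimage_comp_index.
rewrite measure_bigsetU_ord_cond; last exact: trivIset_preimage1.
  rewrite (eq_bigr (fun=> (n.+1%:R^-1)%:E)); last first.
    by move=> i _; case: (g_uniform i).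
  rewrite sumEFin mulr_sumr big_mkcond /=; congr EFin; apply: eq_bigr => i _.
  by rewrite in_itv /= asboolb; case: ifP; rewrite ?mulr1 ?mulr0.
by move=> i _; case: (g_uniform i).
Qed.

Variable rho : (R -> \bar R) -> \bar R.

Lemma exposure_empcdf_fin_num (x : 'I_n.+1 -> R) :
    (forall X : T -> R, measurable_fun setT X ->
      (exists M : R, {ae P, forall w, `|X w| <= M}) ->
      rho (cdfRV P X) \is a fin_num) ->
  rho (empcdf x) \is a fin_num.
Proof.
move=> rho_fin; rewrite -cdfRV_comp_uniform_index.
apply: rho_fin; first exact: measurable_comp_index.
exists (\sum_i `|x i|); apply: aeW => w /=.
by rewrite (bigD1 (g w)) //= lerDl sumr_ge0.
Qed.

Lemma exposure_empcdf_shift (x y : 'I_n.+1 -> R) (s : R) :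
    law_inv_exposure_measure P rho -> (forall i, y i <= x i + s) ->
  (rho (empcdf y) <= rho (empcdf x) + s%:E)%E.
Proof.
move=> [rho_mono rho_cash] yx.
rewrite -!cdfRV_comp_uniform_index -rho_cash; last exact: measurable_comp_index.
apply: rho_mono; [exact: measurable_comp_index | |].
  exact: (measurable_comp_index (fun i => x i + s)).
by apply: aeW => w; apply: yx.
Qed.

End uniform_index.

Lemma ler_max0_dist (R : realFieldType) (u v s : R) :
  `|v - u| <= s -> Num.max u 0 <= Num.max v 0 + s.
Proof.
have v_le : v <= Num.max v 0 by rewrite le_max lexx.
have max_ge0 : 0 <= Num.max v 0 by rewrite le_max lexx orbT.
by rewrite ler_norml ge_max => /andP[? ?]; apply/andP; split; lra.
Qed.

Lemma lee_dist_shift (R : realFieldType) (a b c : \bar R) (s : R) :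
    a \is a fin_num -> b \is a fin_num -> c \is a fin_num ->
    (b <= c + s%:E)%E -> (c <= b + s%:E)%E ->
  (`|a - c| <= `|a - b| + s%:E)%E.
Proof.
move=> /fineK <- /fineK <- /fineK <-.
rewrite -!EFinB !abse_EFin -!EFinD !lee_fin.
move=> bcs cbs; apply: le_trans (ler_distD (fine b) _ _) _.
by rewrite lerD2l ler_distl; apply/andP; split; lra.
Qed.

Theorem proposition1p1 (R : realType) (d : measure_display)
  (T : measurableType d) (P : probability T R) (D n : nat)
  (Z : T -> 'rV[R]_D) (V U : 'rV[R]_D -> R) (z : 'I_n -> 'rV[R]_D)
  (rho : (R -> \bar R) -> \bar R) :
  atomless P ->
  (forall j : 'I_D, measurable_fun setT (fun w => Z w ord0 j)) ->
  compact (supp P Z) ->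
  measurable_fun setT (fun w => Num.max (V (Z w)) 0) ->
  (exists M : R, {ae P, forall w, `|Num.max (V (Z w)) 0| <= M}) ->
  (0 < n)%N ->
  (forall i, supp P Z (z i)) ->
  law_inv_exposure_measure P rho ->
  (* rho is real-valued on compactly supported laws *)
  (forall X : T -> R, measurable_fun setT X ->
     (exists M : R, {ae P, forall w, `|X w| <= M}) ->
     rho (cdfRV P X) \is a fin_num) ->
  let Xt := fun w => Num.max (V (Z w)) 0 in
  let xt := fun i => Num.max (V (z i)) 0 in
  let yt := fun i => Num.max (U (z i)) 0 in
  (`| rho (cdfRV P Xt) - rho (empcdf yt) |
     <= `| rho (cdfRV P Xt) - rho (empcdf xt) |
        + supnorm (supp P Z) (fun a => (V a - U a)%R))%E.
Proof.
move=> P_atomless _ _ mX bX; case: n z => [|n] z; first by rewrite ltnn.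
move=> _ zS rho_exposure rho_fin; cbv zeta.
have [g g_uniform] := atomless_uniform_index P_atomless n.
have fin_emp x := exposure_empcdf_fin_num g_uniform x rho_fin.
have sup_ge i : (`|V (z i) - U (z i)|%:E
                 <= supnorm (supp P Z) (fun a => (V a - U a)%R))%E.
  by apply: ereal_sup_ubound; exists (z i).
case: (supnorm _ _) sup_ge => [s| |] sup_ge.
- apply: lee_dist_shift; rewrite ?fin_emp ?rho_fin //.
  + apply: exposure_empcdf_shift g_uniform _ _ _ _ rho_exposure _ => i.
    by apply: ler_max0_dist; rewrite distrC -lee_fin; exact: sup_ge.
  + apply: exposure_empcdf_shift g_uniform _ _ _ _ rho_exposure _ => i.
    by apply: ler_max0_dist; rewrite -lee_fin; exact: sup_ge.
- by rewrite addey ?leey // gt_eqF // (lt_le_trans ltNy0 (abse_ge0 _)).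
- by have := sup_ge ord0; rewrite leeNy_eq.
Qed.
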